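(* Consider the Clipped FedSMD algorithm described in the context, and assume: (i) for every $i\in[m]$, conditionally on the past, $\mathbb E[\widehat\nabla f_i(x)\mid x]=\nabla f_i(x)$ and $\mathbb E[\|\widehat\nabla f_i(x)-\nabla f_i(x)\|^p\mid x]\le\sigma^p$ for some $\sigma>0$, $p\in(1,2]$; (ii) (separate convexity) for every $x\in\mathcal X$, all $y_1,\dots,y_m\in\mathcal X$ and all $a_1,\dots,a_m\ge0$ with $\sum_j a_j=1$, $D_\Phi(x\|\sum_j a_jy_j)\le\sum_j a_jD_\Phi(x\|y_j)$. Let $x^*\in\mathcal X$ be a minimizer of $f=\sum_{i=1}^m f_i$ over $\mathcal X$. Then for every $t\in[T]$, $$\sum_{i=1}^m\big\langle\alpha_t\widetilde\nabla_{\lambda_t}f_i(x_{i,t}),x_{i,t}-x^*\big\rangle\le\sum_{i=1}^m\big[D_\Phi(x^*\|x_{i,t})-D_\Phi(x^*\|x_{i,t+1})\big]+\frac{\alpha_t^2}{2}\sum_{i=1}^m\big\|\widetilde\nabla_{\lambda_t}f_i(x_{i,t})\big\|^2 .$$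
   Context: Setting: $m,n\in\mathbb N$, $\|\cdot\|$ is the Euclidean norm on $\mathbb R^n$, $\mathcal{X}\subset\mathbb R^n$ is a nonempty closed convex set, $f_i:\mathcal{X}\to\mathbb R$ ($i\in[m]$) are convex differentiable functions and $f=\sum_i f_i$ has a minimizer $x^*$ on $\mathcal X$. $\Phi:\mathcal{X}\to\mathbb R$ is differentiable and $1$-strongly convex, i.e. $\Phi(x)-\Phi(y)\ge\langle\nabla\Phi(y),x-y\rangle+\frac12\|x-y\|^2$, and $D_\Phi(x\|y)=\Phi(x)-\Phi(y)-\langle\nabla\Phi(y),x-y\rangle$. At a query point $x$, agent $i$ receives a random vector $\widehat\nabla f_i(x)$. For $\lambda>0$, $\widetilde\nabla_\lambda f_i(x)=\min\{1,\lambda/\|\widehat\nabla f_i(x)\|\}\,\widehat\nabla f_i(x)$. Clipped FedSMD: communication period $\mathcal P\in\mathbb N$, rounds $\mathcal T$, communication instants $\mathcal I=\{1+k\mathcal P:k=1,\dots,\mathcal T\}$, horizon $T=1+\mathcal T\mathcal P$, positive stepsizes $(\alpha_t)$, positive clipping parameters $(\lambda_t)$. Starting from $x_{i,1}\in\mathcal X$, for $t=1,\dots,T$ and each agent $i$: $y_{i,t+1}=\arg\min_{x\in\mathcal X}\{\langle\widetilde\nabla_{\lambda_t}f_i(x_{i,t}),x\rangle+\frac1{\alpha_t}D_\Phi(x\|x_{i,t})\}$; if $t+1\in\mathcal I$ then $x_{i,t+1}=\frac1m\sum_{j=1}^m y_{j,t+1}$, otherwise $x_{i,t+1}=y_{i,t+1}$.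 *)

From HB Require Import structures.
From mathcomp Require Import all_boot all_order all_algebra.
From mathcomp Require Import all_classical all_reals all_analysis.
Set Implicit Arguments. Unset Strict Implicit. Unset Printing Implicit Defensive.
Import Order.TTheory GRing.Theory Num.Theory.
Import numFieldNormedType.Exports.
Local Open Scope classical_set_scope.
Local Open Scope ring_scope.

Section Defs.
Variables (R : realType) (n : nat).
Implicit Types (u v x y : 'rV[R]_n) (X : set 'rV[R]_n).

Definition dot u v : R := \sum_(k < n) u 0 k * v 0 k.
Definition enorm u : R := Num.sqrt (dot u u).

Definition convex_subset X : Prop :=
  forall x y, X x -> X y -> forall t : R, 0 <= t <= 1 -> X (t *: x + (1 - t) *: y).

Definition convex_on X (h : 'rV[R]_n -> R) : Prop :=
  forall x y, X x -> X y -> forall t : R, 0 <= t <= 1 ->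
    h (t *: x + (1 - t) *: y) <= t * h x + (1 - t) * h y.

(* [g] is the gradient of [h] on X: for x, y in X the (one-sided, within X)
   directional derivative of h at x in direction y - x equals <g x, y - x>. *)
Definition grad_on X (h : 'rV[R]_n -> R) (g : 'rV[R]_n -> 'rV[R]_n) : Prop :=
  forall x y, X x -> X y ->
    (fun s : R => (h (x + s *: (y - x)) - h x) / s) @ 0^'+ --> dot (g x) (y - x).

Definition strongly_convex1 X (h : 'rV[R]_n -> R) (g : 'rV[R]_n -> 'rV[R]_n) : Prop :=
  forall x y, X x -> X y -> h x - h y >= dot (g y) (x - y) + 2^-1 * enorm (x - y) ^+ 2.

Definition bregman (Phi : 'rV[R]_n -> R) (gPhi : 'rV[R]_n -> 'rV[R]_n) x y : R :=
  Phi x - Phi y - dot (gPhi y) (x - y).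

Definition clip (lam : R) v : 'rV[R]_n := Num.min 1 (lam / enorm v) *: v.

Definition is_argmin X (obj : 'rV[R]_n -> R) y : Prop :=
  X y /\ forall z, X z -> obj y <= obj z.

End Defs.

From HB Require Import structures.
From mathcomp Require Import all_boot all_order all_algebra.
From mathcomp Require Import all_classical all_reals all_analysis.
From mathcomp Require Import ring lra.
Set Implicit Arguments. Unset Strict Implicit. Unset Printing Implicit Defensive.
Import Order.TTheory GRing.Theory Num.Theory.
Import numFieldNormedType.Exports.
Local Open Scope classical_set_scope.
Local Open Scope ring_scope.

(* Each agent performs one mirror step, whose first-order optimality condition
   combined with the three-point identity of Bregman divergences and
   1-strong convexity of Phi yields the per-agent inequality
   <a g, x - z> <= D(z||x) - D(z||y) + a^2/2 |g|^2.  Summing over agents, it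
   remains to compare sum_i D(z||x_{i,t+1}) with sum_i D(z||y_{i,t+1}): they are
   equal outside communication rounds, and at a communication round separate
   convexity bounds the divergence to the average by the average divergence. *)

Section Dot.
Variables (R : realType) (n : nat).
Implicit Types (u v w : 'rV[R]_n).

Lemma dotC u v : dot u v = dot v u.
Proof. by apply: eq_bigr => k _; rewrite mulrC. Qed.

Lemma dotDr u v w : dot u (v + w) = dot u v + dot u w.
Proof. by rewrite /dot -big_split; apply: eq_bigr => k _; rewrite mxE mulrDr. Qed.

Lemma dotZr (a : R) u v : dot u (a *: v) = a * dot u v.
Proof. by rewrite /dot mulr_sumr; apply: eq_bigr => k _; rewrite mxE mulrCA. Qed.

Lemma dotNr u v : dot u (- v) = - dot u v.
Proof. by rewrite /dot -sumrN; apply: eq_bigr => k _; rewrite mxE mulrN. Qed.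

Lemma dotBr u v w : dot u (v - w) = dot u v - dot u w.
Proof. by rewrite dotDr dotNr. Qed.

Lemma dotZl (a : R) u v : dot (a *: u) v = a * dot u v.
Proof. by rewrite dotC dotZr dotC. Qed.

Lemma dotBl u v w : dot (u - v) w = dot u w - dot v w.
Proof. by rewrite dotC dotBr !(dotC w). Qed.

Lemma dotDl u v w : dot (u + v) w = dot u w + dot v w.
Proof. by rewrite dotC dotDr !(dotC w). Qed.

Lemma dotNl u v : dot (- u) v = - dot u v.
Proof. by rewrite dotC dotNr dotC. Qed.

Lemma dot_ge0 u : 0 <= dot u u.
Proof. by apply: sumr_ge0 => k _; rewrite -expr2 sqr_ge0. Qed.

Lemma enorm_sqr u : enorm u ^+ 2 = dot u u.
Proof. by rewrite sqr_sqrtr // dot_ge0. Qed.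

Lemma enormN u : enorm (- u) = enorm u.
Proof. by rewrite /enorm dotNl dotNr opprK. Qed.

Lemma enormZ_sqr (a : R) u : enorm (a *: u) ^+ 2 = a ^+ 2 * enorm u ^+ 2.
Proof. by rewrite !enorm_sqr dotZl dotZr mulrA -expr2. Qed.

Lemma dot_le_half_sqr u v : dot u v <= 2^-1 * (enorm u ^+ 2 + enorm v ^+ 2).
Proof.
have := dot_ge0 (u - v); rewrite !enorm_sqr !dotBl !dotBr (dotC v u); lra.
Qed.

End Dot.

Section Bregman.
Variables (R : realType) (n : nat).
Variables (X : set 'rV[R]_n) (Phi : 'rV[R]_n -> R) (gPhi : 'rV[R]_n -> 'rV[R]_n).
Implicit Types (x y z : 'rV[R]_n).

Local Notation D := (bregman Phi gPhi).

Lemma bregman_three_point x y z :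
  D z x - D z y - D y x = dot (gPhi y - gPhi x) (z - y).
Proof. by rewrite /bregman !dotBl !dotBr; ring. Qed.

Lemma bregman_ge_half_sqr x y :
  strongly_convex1 X Phi gPhi -> X x -> X y -> 2^-1 * enorm (x - y) ^+ 2 <= D x y.
Proof. by move=> strongPhi Xx Xy; rewrite /bregman lerBrDr addrC; exact: strongPhi. Qed.

End Bregman.

Definition average (R : realType) (n m : nat) (ys : 'I_m -> 'rV[R]_n) :
  'rV[R]_n := m%:R^-1 *: \sum_j ys j.

Section ConvexSubset.
Variables (R : realType) (n : nat) (X : set 'rV[R]_n).
Hypothesis convX : convex_subset X.

Lemma convex_subset_segment x z s : X x -> X z -> 0 < s <= 1 ->
  X (x + s *: (z - x)).
Proof.
move=> Xx Xz /andP[s0 s1].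
have -> : x + s *: (z - x) = s *: z + (1 - s) *: x.
  by apply/rowP => k; rewrite !mxE; ring.
by apply: convX => //; rewrite ltW.
Qed.

Lemma convex_subset_comb (I : eqType) (s : seq I) (a : I -> R)
    (ys : I -> 'rV[R]_n) :
  (forall j, X (ys j)) -> (forall j, 0 <= a j) -> \sum_(j <- s) a j = 1 ->
  X (\sum_(j <- s) a j *: ys j).
Proof.
move=> Xys; elim: s a => [|j s IH] a a0.
  by rewrite big_nil => /esym/eqP; rewrite oner_eq0.
rewrite !big_cons; set S := \sum_(k <- s) a k => a1.
have S0 : 0 <= S by exact: sumr_ge0.
have [SE0|SN0] := eqVneq S 0.
  have ak0 k : k \in s -> a k = 0.
    by move=> ks; move/eqP: SE0; rewrite /S psumr_eq0 // => /allP/(_ k ks)/eqP.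
  rewrite big_seq big1 => [|k ks]; last by rewrite ak0 ?scale0r.
  by rewrite addr0 -[a j]addr0 -SE0 a1 scale1r.
have -> : \sum_(k <- s) a k *: ys k = S *: \sum_(k <- s) (a k / S) *: ys k.
  by rewrite scaler_sumr; apply: eq_bigr => k _; rewrite scalerA mulrCA divff ?mulr1.
have Xw : X (\sum_(k <- s) (a k / S) *: ys k).
  by apply: IH => [k|]; rewrite ?divr_ge0 ?a0 // -mulr_suml divff.
have eS : S = 1 - a j by rewrite -a1 addrC addKr.
rewrite eS in Xw *; apply: convX => //.
by rewrite a0 -a1 lerDl.
Qed.

Lemma convex_subset_average m (ys : 'I_m -> 'rV[R]_n) : (0 < m)%N ->
  (forall j, X (ys j)) -> X (average ys).
Proof.
move=> m0 Xys; rewrite /average scaler_sumr.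
apply: convex_subset_comb => [//|j|]; first by rewrite invr_ge0.
by rewrite sumr_const card_ord -[LHS]mulr_natr mulVf // pnatr_eq0 -lt0n.
Qed.

End ConvexSubset.

Section MirrorStep.
Variables (R : realType) (n : nat) (X : set 'rV[R]_n).
Variables (Phi : 'rV[R]_n -> R) (gPhi : 'rV[R]_n -> 'rV[R]_n).
Hypotheses (convX : convex_subset X) (gradPhi : grad_on X Phi gPhi).

Local Notation D := (bregman Phi gPhi).

Lemma argmin_grad_ge0 (h : 'rV[R]_n -> R) gh y z :
  grad_on X h gh -> is_argmin X h y -> X z -> 0 <= dot (gh y) (z - y).
Proof.
move=> gradh [Xy miny] Xz; apply: cvgr_to_ge (gradh _ _ Xy Xz) _.
near=> s.
have s0 : 0 < s by near: s; exact: nbhs_right_gt.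
have s1 : s <= 1 by near: s; exact: nbhs_right_le.
rewrite divr_ge0 ?subr_ge0 ?miny ?ltW //.
by apply: convex_subset_segment; rewrite ?s0.
Unshelve. all: by end_near.
Qed.

Lemma grad_on_mirror_objective (g x : 'rV[R]_n) (a : R) :
  grad_on X (fun z => dot g z + a^-1 * D z x)
            (fun z => g + a^-1 *: (gPhi z - gPhi x)).
Proof.
move=> u v Xu Xv.
have quotE : {near 0^'+, (fun s => dot g (v - u) + a^-1 *
    ((Phi (u + s *: (v - u)) - Phi u) / s - dot (gPhi x) (v - u))) =1
    (fun s => (dot g (u + s *: (v - u)) + a^-1 * D (u + s *: (v - u)) x
               - (dot g u + a^-1 * D u x)) / s)}.
  near=> s; have s0 : s != 0 by apply: lt0r_neq0; near: s; exact: nbhs_right_gt.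
  rewrite /bregman !(dotBr, dotDr, dotZr); set c := a^-1; field.
  exact: s0.
apply: cvg_trans (near_eq_cvg quotE) _.
rewrite dotDl dotZl dotBl.
apply: cvgD; first exact: cvg_cst.
apply: cvgM; first exact: cvg_cst.
apply: cvgB; [exact: gradPhi | exact: cvg_cst].
Unshelve. all: by end_near.
Qed.

Lemma mirror_step_le (g x y z : 'rV[R]_n) (a : R) :
  strongly_convex1 X Phi gPhi -> 0 < a -> X x -> X z ->
  is_argmin X (fun w => dot g w + a^-1 * D w x) y ->
  dot (a *: g) (x - z) <= D z x - D z y + a ^+ 2 / 2 * enorm g ^+ 2.
Proof.
move=> strongPhi a0 Xx Xz ymin.
have optimality : 0 <= a * dot g (z - y) + dot (gPhi y - gPhi x) (z - y).
  have := argmin_grad_ge0 (@grad_on_mirror_objective g x a) ymin Xz.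
  by rewrite dotDl dotZl -(pmulr_rge0 _ a0) mulrDr mulrA divff ?gt_eqF ?mul1r.
have three_point := bregman_three_point Phi gPhi x y z.
have strong := bregman_ge_half_sqr strongPhi ymin.1 Xx.
have young := dot_le_half_sqr (a *: g) (x - y).
rewrite enormZ_sqr -(enormN (x - y)) opprB in young.
move: optimality three_point strong young; rewrite !dotZl !dotBr; lra.
Qed.

End MirrorStep.

Definition communicate (R : realType) (n m : nat) (b : bool)
  (ys : 'I_m -> 'rV[R]_n) (i : 'I_m) : 'rV[R]_n :=
  if b then average ys else ys i.

Section Communication.
Variables (R : realType) (n m : nat) (X : set 'rV[R]_n).
Variables (Phi : 'rV[R]_n -> R) (gPhi : 'rV[R]_n -> 'rV[R]_n).
Hypotheses (convX : convex_subset X) (m_gt0 : (0 < m)%N).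
Hypothesis bregman_sep_convex : forall z, X z ->
  forall (ys : 'I_m -> 'rV[R]_n) (a : 'I_m -> R),
  (forall j, X (ys j)) -> (forall j, 0 <= a j) -> \sum_j a j = 1 ->
  bregman Phi gPhi z (\sum_j a j *: ys j) <= \sum_j a j * bregman Phi gPhi z (ys j).

Local Notation D := (bregman Phi gPhi).

Lemma communicate_in b (ys : 'I_m -> 'rV[R]_n) i :
  (forall j, X (ys j)) -> X (communicate b ys i).
Proof. by move=> Xys; case: b; [exact: convex_subset_average | exact: Xys]. Qed.

Lemma bregman_average_sum_le z (ys : 'I_m -> 'rV[R]_n) : X z ->
  (forall j, X (ys j)) -> \sum_(i < m) D z (average ys) <= \sum_i D z (ys i).
Proof.
move=> Xz Xys; have m_pos : 0 < m%:R :> R by rewrite ltr0n.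
have w_ge0 (j : 'I_m) : 0 <= m%:R^-1 :> R by rewrite invr_ge0 ltW.
have w_sum1 : \sum_(j < m) m%:R^-1 = 1 :> R.
  by rewrite sumr_const card_ord -[LHS]mulr_natr mulVf ?gt_eqF.
have := bregman_sep_convex Xz Xys w_ge0 w_sum1.
rewrite -scaler_sumr -mulr_sumr sumr_const card_ord -/(average ys) => avg_le.
by rewrite -mulr_natr -ler_pdivlMr // mulrC.
Qed.

Lemma bregman_communicate_sum_le b z (ys : 'I_m -> 'rV[R]_n) : X z ->
  (forall j, X (ys j)) ->
  \sum_i D z (communicate b ys i) <= \sum_i D z (ys i).
Proof. by case: b => Xz Xys; [exact: bregman_average_sum_le | exact: lexx]. Qed.

End Communication.

Theorem proposition2 (R : realType) (m n : nat)
  (X : set 'rV[R]_n) (f : 'I_m -> 'rV[R]_n -> R) (gf : 'I_m -> 'rV[R]_n -> 'rV[R]_n)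
  (Phi : 'rV[R]_n -> R) (gPhi : 'rV[R]_n -> 'rV[R]_n) (xstar : 'rV[R]_n)
  (P TT : nat) (alpha lambda : nat -> R)
  (ghat : 'I_m -> nat -> 'rV[R]_n)
  (x y : 'I_m -> nat -> 'rV[R]_n) :
  (0 < m)%N ->
  X !=set0 -> closed X -> convex_subset X ->
  (forall i, convex_on X (f i)) ->
  (forall i, grad_on X (f i) (gf i)) ->
  grad_on X Phi gPhi ->
  strongly_convex1 X Phi gPhi ->
  (* separate convexity of the Bregman divergence *)
  (forall z, X z -> forall (ys : 'I_m -> 'rV[R]_n) (a : 'I_m -> R),
     (forall j, X (ys j)) -> (forall j, 0 <= a j) -> \sum_j a j = 1 ->
     bregman Phi gPhi z (\sum_j a j *: ys j)
       <= \sum_j a j * bregman Phi gPhi z (ys j)) ->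
  (* x* minimizes f = sum_i f_i over X *)
  X xstar -> (forall z, X z -> \sum_i f i xstar <= \sum_i f i z) ->
  (* parameters *)
  (forall t, 0 < alpha t) -> (forall t, 0 < lambda t) ->
  (* Clipped FedSMD; ghat i t is the (realized) stochastic gradient received
     by agent i at query point x i t *)
  (forall i, X (x i 1%N)) ->
  (forall i t, (1 <= t <= 1 + TT * P)%N ->
     is_argmin X (fun z => dot (clip (lambda t) (ghat i t)) z
                           + (alpha t)^-1 * bregman Phi gPhi z (x i t)) (y i t.+1)) ->
  (forall i t, (1 <= t <= 1 + TT * P)%N ->
     x i t.+1 = if [exists k : 'I_TT, t.+1 == 1 + k.+1 * P]%N
                then m%:R^-1 *: \sum_j y j t.+1
                else y i t.+1) ->
  forall t, (1 <= t <= 1 + TT * P)%N ->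
    \sum_i dot (alpha t *: clip (lambda t) (ghat i t)) (x i t - xstar)
    <= \sum_i (bregman Phi gPhi xstar (x i t) - bregman Phi gPhi xstar (x i t.+1))
       + (alpha t ^+ 2 / 2) * \sum_i enorm (clip (lambda t) (ghat i t)) ^+ 2.
Proof.
move=> m_gt0 _ _ convX _ _ gradPhi strongPhi sep_convex Xstar _ alpha_gt0 _.
move=> X1 step comm t ht.
have Xy i t' : (1 <= t' <= 1 + TT * P)%N -> X (y i t'.+1).
  by move=> ht'; case: (step i t' ht').
have Xx i : X (x i t).
  case: t ht => [|[|t]] ht //.
  have ht' : (1 <= t.+1 <= 1 + TT * P)%N by case/andP: ht => _ /ltnW.
  by rewrite (comm i _ ht'); apply: communicate_in => // j; exact: Xy.
have per_agent i :=
  mirror_step_le convX gradPhi strongPhi (alpha_gt0 t) (Xx i) Xstar (step i t ht).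
have comm_le : \sum_i bregman Phi gPhi xstar (x i t.+1)
               <= \sum_i bregman Phi gPhi xstar (y i t.+1).
  under eq_bigr => i _ do rewrite comm //.
  exact: (bregman_communicate_sum_le m_gt0 sep_convex _ Xstar (fun j => Xy j t ht)).
apply: le_trans (ler_sum _ (fun i _ => per_agent i)) _.
rewrite big_split /= -mulr_sumr lerD2r.
by rewrite !(sumrB _ _ (fun i => bregman Phi gPhi xstar (x i t))) lerD2l lerN2.
Qed.
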